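(* For every Schauder basic spreading sequence $(e_n)_n$ there exists $(\widetilde e_n)_n\in\mathcal{SM}_2(c_0)$ equivalent to $(e_n)_n$. Moreover, if $(e_n)_n$ is bimonotone, then $(e_n)_n$ itself (up to isometric equivalence) belongs to $\mathcal{SM}_2(c_0)$.
   Context: A sequence $(e_n)$ in a seminormed space $(E,\|\cdot\|_* )$ is spreading if $\|\sum_{j=1}^n a_je_j\|_*=\|\sum_{j=1}^n a_je_{k_j}\|_*$ for all $n$, $k_1<\dots<k_n$, reals $a_j$. $[M]^2$: 2-subsets of $M\subseteq\mathbb{N}$ (increasing enumerations, $M(l)$ the $l$-th element). A plegma family in $[M]^2$ is $(s_j)_{j=1}^l$ with $s_1(1)<\dots<s_l(1)<s_1(2)<\dots<s_l(2)$. A 2-sequence $(x_s)_{s\in[\mathbb{N}]^2}$ in a Banach space $X$ generates the Hamel basis $(e_n)$ of $(E,\|\cdot\|_* )$ as a $2$-spreading model via infinite $M$ if for a null sequence $\delta_l>0$: $|\|\sum_{j=1}^m a_jx_{s_j}\|-\|\sum_{j=1}^m a_je_j\|_*|\le\delta_l$ for all $m\le l$, plegma $(s_j)_{j=1}^m$ in $[M]^2$ with $s_1(1)\ge M(l)$, $a_j\in[-1,1]$. $\mathcal{SM}_2(X)$ is the set of sequences arising this way from 2-sequences in $X$. Bimonotone: $\|\sum_{i=p}^q a_ie_i\|\le\|\sum_{i=1}^n a_ie_i\|$ for all $1\le p\le q\le n$. *)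

From Stdlib Require Import Reals Lra Lia ClassicalEpsilon.
Open Scope R_scope.

Record SNSpace := {
  car :> Type;
  vzero : car;
  vadd : car -> car -> car;
  vscal : R -> car -> car;
  snorm : car -> R;
  vadd_assoc : forall x y z, vadd x (vadd y z) = vadd (vadd x y) z;
  vadd_comm : forall x y, vadd x y = vadd y x;
  vadd_0 : forall x, vadd x vzero = x;
  vadd_opp : forall x, vadd x (vscal (-1) x) = vzero;
  vscal_1 : forall x, vscal 1 x = x;
  vscal_assoc : forall a b x, vscal a (vscal b x) = vscal (a * b) x;
  vscal_distr_v : forall a x y, vscal a (vadd x y) = vadd (vscal a x) (vscal a y);
  vscal_distr_s : forall a b x, vscal (a + b) x = vadd (vscal a x) (vscal b x);
  snorm_scal : forall a x, snorm (vscal a x) = Rabs a * snorm x;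
  snorm_triangle : forall x y, snorm (vadd x y) <= snorm x + snorm y
}.

(** [lincomb E a e k] = sum_{j<k} a_j e_j  (0-based indices: paper's e_{j+1} is [e j]). *)
Fixpoint lincomb (E : SNSpace) (a : nat -> R) (e : nat -> E) (k : nat) : E :=
  match k with
  | O => vzero E
  | S k' => vadd E (lincomb E a e k') (vscal E (a k') (e k'))
  end.

Fixpoint rsum (g : nat -> R) (k : nat) : R :=
  match k with O => 0 | S k' => rsum g k' + g k' end.

Definition hamel_basis (E : SNSpace) (e : nat -> E) : Prop :=
  (forall a k, lincomb E a e k = vzero E -> forall j, (j < k)%nat -> a j = 0) /\
  (forall x : E, exists a k, x = lincomb E a e k).

Definition spreading (E : SNSpace) (e : nat -> E) : Prop :=
  forall (n : nat) (p : nat -> nat) (a : nat -> R),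
    (forall i j, (i < j < n)%nat -> (p i < p j)%nat) ->
    snorm E (lincomb E a e n) = snorm E (lincomb E a (fun j => e (p j)) n).

(** Schauder basic (Grunblum criterion): nonzero vectors, uniformly bounded
    initial-segment projections. *)
Definition schauder_basic (E : SNSpace) (e : nat -> E) : Prop :=
  (forall n, snorm E (e n) <> 0) /\
  exists K, forall (a : nat -> R) (m n : nat), (m <= n)%nat ->
    snorm E (lincomb E a e m) <= K * snorm E (lincomb E a e n).

Definition bimonotone (E : SNSpace) (e : nat -> E) : Prop :=
  forall (a : nat -> R) (p q n : nat), (p <= q < n)%nat ->
    snorm E (lincomb E (fun i => if andb (Nat.leb p i) (Nat.leb i q) then a i else 0) e n)
    <= snorm E (lincomb E a e n).

Definition equivalent (E F : SNSpace) (e : nat -> E) (f : nat -> F) : Prop :=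
  exists c C, 0 < c /\ 0 < C /\
    forall (a : nat -> R) (n : nat),
      c * snorm E (lincomb E a e n) <= snorm F (lincomb F a f n) /\
      snorm F (lincomb F a f n) <= C * snorm E (lincomb E a e n).

Definition isometrically_equivalent (E F : SNSpace) (e : nat -> E) (f : nat -> F) : Prop :=
  forall (a : nat -> R) (n : nat), snorm E (lincomb E a e n) = snorm F (lincomb F a f n).

Definition in_c0 (x : nat -> R) : Prop := Un_cv x 0.

Definition supnorm (x : nat -> R) : R :=
  epsilon (inhabits 0) (fun r => is_lub (fun y => exists n, y = Rabs (x n)) r).

(** Infinite M ⊆ ℕ given by its strictly increasing enumeration [M]
    (paper's M(l), l >= 1, is [M (l-1)]). *)
Definition strictly_increasing (M : nat -> nat) : Prop :=
  forall i j, (i < j)%nat -> (M i < M j)%nat.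

Definition in_range (M : nat -> nat) (n : nat) : Prop := exists i, M i = n.

(** A plegma family (s_j)_{j<m} in [M]^2 ; a 2-subset s is a pair (s(1), s(2)). *)
Definition plegma (M : nat -> nat) (s : nat -> nat * nat) (m : nat) : Prop :=
  (forall j, (j < m)%nat ->
     in_range M (fst (s j)) /\ in_range M (snd (s j)) /\ (fst (s j) < snd (s j))%nat) /\
  (forall j, (S j < m)%nat ->
     (fst (s j) < fst (s (S j)))%nat /\ (snd (s j) < snd (s (S j)))%nat) /\
  ((0 < m)%nat -> (fst (s (pred m)) < snd (s 0%nat))%nat).

Definition generates_2SM_c0 (x : nat -> nat -> (nat -> R)) (E : SNSpace) (e : nat -> E)
    (M : nat -> nat) : Prop :=
  exists delta : nat -> R,
    (forall l, 0 < delta l) /\ Un_cv delta 0 /\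
    forall (l m : nat) (s : nat -> nat * nat) (a : nat -> R),
      (1 <= l)%nat -> (1 <= m <= l)%nat -> plegma M s m ->
      (M (pred l) <= fst (s 0%nat))%nat ->
      (forall j, (j < m)%nat -> -1 <= a j <= 1) ->
      Rabs (supnorm (fun n => rsum (fun j => a j * x (fst (s j)) (snd (s j)) n) m)
            - snorm E (lincomb E a e m)) <= delta l.

Definition in_SM2_c0 (E : SNSpace) (e : nat -> E) : Prop :=
  hamel_basis E e /\
  exists (x : nat -> nat -> (nat -> R)) (M : nat -> nat),
    (forall s1 s2, (s1 < s2)%nat -> in_c0 (x s1 s2)) /\
    strictly_increasing M /\
    generates_2SM_c0 x E e M.

(* For a bimonotone spreading norm on the finitely supported sequences, choose for every
   level k a finite family of functionals on the first k+1 coordinates that are dominated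
   by the norm and norm every vector with coefficients in [-1,1] up to an error
   O(1/(k+1)) (a grid of norming functionals given by finite-dimensional Hahn-Banach).
   List all these functionals one level after the other along ℕ, and let x_{s1,s2} be the
   c_0-sequence whose n-th entry is the s1-th coordinate of the n-th functional when its
   level k satisfies s1 <= k < s2, and 0 otherwise. Evaluated on a plegma family, the
   n-th entry of sum_j a_j x_{s_j} is the n-th functional applied to the vector a, cut
   down to an interval of indices and spread onto the positions s_j(1): by bimonotonicity
   and spreading it is at most the norm of a, and at the level s_m(1) it almost attains it.
   A bimonotone spreading sequence is the unit vector basis of such a norm; a Schauder basic
   spreading sequence is equivalent to the unit vector basis of the norm given by the
   supremum of its interval projections, which is bimonotone and still spreading. *)

From Stdlib Require Import Reals Lra Lia ClassicalEpsilon FunctionalExtensionality ProofIrrelevance List.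
Import ListNotations.
Open Scope R_scope.

Ltac case_nat_tests := repeat match goal with
 | |- context [Nat.ltb ?a ?b] => destruct (Nat.ltb_spec a b)
 | |- context [Nat.leb ?a ?b] => destruct (Nat.leb_spec a b)
 | |- context [Nat.eqb ?a ?b] => destruct (Nat.eqb_spec a b)
 end.

Lemma Rabs_m1 : Rabs (-1) = 1.
Proof. unfold Rabs; destruct (Rcase_abs (-1)); lra. Qed.

Lemma Rabs_le_inv x b : Rabs x <= b -> - b <= x <= b.
Proof. pose proof (Rle_abs x); pose proof (Rle_abs (- x)); rewrite Rabs_Ropp in *; lra. Qed.

Lemma rsum_ext f g k : (forall i, (i < k)%nat -> f i = g i) -> rsum f k = rsum g k.
Proof.
  induction k as [|k IH]; intros H; simpl; auto.
  rewrite IH, (H k); auto; intros; apply H; lia.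
Qed.

Lemma rsum_plus f g k : rsum (fun i => f i + g i) k = rsum f k + rsum g k.
Proof. induction k; simpl; [lra | rewrite IHk; lra]. Qed.

Lemma rsum_scal c f k : rsum (fun i => c * f i) k = c * rsum f k.
Proof. induction k; simpl; [lra | rewrite IHk; lra]. Qed.

Lemma rsum_eq0 f k : (forall i, (i < k)%nat -> f i = 0) -> rsum f k = 0.
Proof.
  intros H. rewrite (rsum_ext f (fun i => 0 * 0)) by (intros; rewrite H; lia || ring).
  rewrite rsum_scal; ring.
Qed.

Lemma rsum_indicator (c : nat -> R) j K :
  rsum (fun i => if Nat.eqb j i then c i else 0) K = if Nat.ltb j K then c j else 0.
Proof.
  induction K; simpl; [case_nat_tests; auto; lia|].
  rewrite IHK. case_nat_tests; subst; try lia; ring.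
Qed.

Lemma rsum_le f g k : (forall i, (i < k)%nat -> f i <= g i) -> rsum f k <= rsum g k.
Proof.
  induction k as [|k IH]; intros H; simpl; [lra|].
  pose proof (H k ltac:(lia)); pose proof (IH ltac:(intros; apply H; lia)); lra.
Qed.

Lemma rsum_nonneg f k : (forall i, (i < k)%nat -> 0 <= f i) -> 0 <= rsum f k.
Proof. intros H. rewrite <- (rsum_eq0 (fun _ => 0) k) by auto. now apply rsum_le. Qed.

Lemma rsum_le_const f k B : (forall i, (i < k)%nat -> f i <= B) -> rsum f k <= INR k * B.
Proof.
  induction k as [|k IH]; intros H; [simpl; lra|].
  change (rsum f (S k)) with (rsum f k + f k). rewrite S_INR.
  pose proof (H k ltac:(lia)); pose proof (IH ltac:(intros; apply H; lia)); lra.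
Qed.

(** * Finite-dimensional Hahn–Banach *)

Definition dot (K : nat) (c u : nat -> R) : R := rsum (fun i => c i * u i) K.

Lemma dot_add K c u v : dot K c (fun i => u i + v i) = dot K c u + dot K c v.
Proof. unfold dot. rewrite <- rsum_plus. apply rsum_ext; intros; ring. Qed.

Lemma dot_opp K c u : dot K c (fun i => - u i) = - dot K c u.
Proof.
  unfold dot. rewrite (rsum_ext _ (fun i => -1 * (c i * u i))) by (intros; ring).
  rewrite rsum_scal; ring.
Qed.

Definition sublinear (K : nat) (p : (nat -> R) -> R) : Prop :=
  (forall u v, (forall i, (i < K)%nat -> u i = v i) -> p u = p v) /\
  (forall u v, p (fun i => u i + v i) <= p u + p v) /\
  (forall t u, 0 < t -> p (fun i => t * u i) = t * p u).

Definition Rinf (f : R -> R) : R :=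
  epsilon (inhabits 0)
    (fun r => (forall t, r <= f t) /\ forall b, (forall t, b <= f t) -> b <= r).

Lemma Rinf_spec f : (exists b, forall t, b <= f t) ->
  (forall t, Rinf f <= f t) /\ (forall b, (forall t, b <= f t) -> b <= Rinf f).
Proof.
  intros [b Hb]. unfold Rinf. apply epsilon_spec.
  destruct (completeness (fun z => exists t, z = - f t)) as [m [Hub Hlub]].
  - exists (- b). intros z [t ->]. specialize (Hb t). lra.
  - exists (- f 0), 0. reflexivity.
  - exists (- m). split.
    + intros t. assert (- f t <= m) by (apply Hub; exists t; auto). lra.
    + intros b' Hb'. assert (m <= - b') by (apply Hlub; intros z [t ->]; specialize (Hb' t); lra). lra.
Qed.

Lemma convex_has_subgradient (g : R -> R) t0 :
  (forall t d, 0 < t -> 0 < d -> (t + d) * g t0 <= t * g (t0 - d) + d * g (t0 + t)) ->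
  exists c, forall t, g t0 + c * (t - t0) <= g t.
Proof.
  intros Hconv.
  assert (Hslopes : forall d t, 0 < d -> 0 < t ->
            (g t0 - g (t0 - d)) / d <= (g (t0 + t) - g t0) / t).
  { intros d t Hd Ht. pose proof (Hconv t d Ht Hd).
    apply Rmult_le_reg_r with (d * t); [nra|].
    replace ((g t0 - g (t0 - d)) / d * (d * t)) with ((g t0 - g (t0 - d)) * t) by (field; lra).
    replace ((g (t0 + t) - g t0) / t * (d * t)) with ((g (t0 + t) - g t0) * d) by (field; lra).
    nra. }
  (* The supremum of the left difference quotients is a subgradient. *)
  destruct (completeness (fun y => exists d, 0 < d /\ y = (g t0 - g (t0 - d)) / d))
    as [c [Hub Hlub]].
  - exists ((g (t0 + 1) - g t0) / 1). intros y [d [Hd ->]]. apply Hslopes; lra.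
  - exists ((g t0 - g (t0 - 1)) / 1), 1. split; lra.
  - exists c. intros t. destruct (Rtotal_order t t0) as [Hlt|[->|Hgt]]; [| lra |].
    + assert (Hy : (g t0 - g (t0 - (t0 - t))) / (t0 - t) <= c)
        by (apply Hub; exists (t0 - t); split; [lra|auto]).
      replace (t0 - (t0 - t)) with t in Hy by ring.
      apply Rmult_le_compat_r with (r := t0 - t) in Hy; [|lra].
      replace ((g t0 - g t) / (t0 - t) * (t0 - t)) with (g t0 - g t) in Hy by (field; lra). nra.
    + assert (Hy : c <= (g (t0 + (t - t0)) - g t0) / (t - t0))
        by (apply Hlub; intros y [d [Hd ->]]; apply Hslopes; lra).
      replace (t0 + (t - t0)) with t in Hy by ring.
      apply Rmult_le_compat_r with (r := t - t0) in Hy; [|lra].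
      replace ((g t - g t0) / (t - t0) * (t - t0)) with (g t - g t0) in Hy by (field; lra). nra.
Qed.

Definition set_coord (K : nat) (u : nat -> R) (t : R) : nat -> R :=
  fun i => if Nat.eqb i K then t else u i.

(* Minimising out the K-th coordinate, after subtracting the linear term [t * c], lowers
   the dimension of a sublinear functional by one. *)
Section MinimiseLastCoordinate.

Variables (K : nat) (p : (nat -> R) -> R) (c : R).
Hypothesis p_sublinear : sublinear (S K) p.
Hypothesis slice_bounded : forall u, exists b, forall t, b <= p (set_coord K u t) - t * c.

Definition slice_inf (u : nat -> R) : R := Rinf (fun t => p (set_coord K u t) - t * c).

Lemma slice_inf_le u t : slice_inf u <= p (set_coord K u t) - t * c.
Proof. exact (proj1 (Rinf_spec _ (slice_bounded u)) t). Qed.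

Lemma slice_inf_ge u b : (forall t, b <= p (set_coord K u t) - t * c) -> b <= slice_inf u.
Proof. exact (proj2 (Rinf_spec _ (slice_bounded u)) b). Qed.

Lemma slice_inf_sublinear : sublinear K slice_inf.
Proof.
  destruct p_sublinear as [p_ext [p_add p_hom]].
  split; [|split].
  - intros u w Huw. unfold slice_inf. f_equal. apply functional_extensionality; intros t.
    f_equal. apply p_ext. intros i Hi. unfold set_coord. case_nat_tests; auto. apply Huw; lia.
  - intros u w.
    assert (Hsplit : forall t1 t2, slice_inf (fun i => u i + w i)
               <= (p (set_coord K u t1) - t1 * c) + (p (set_coord K w t2) - t2 * c)).
    { intros t1 t2. eapply Rle_trans; [apply (slice_inf_le _ (t1 + t2))|].
      assert (p (set_coord K (fun i => u i + w i) (t1 + t2))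
              <= p (set_coord K u t1) + p (set_coord K w t2)).
      { eapply Rle_trans; [|apply p_add]. right. f_equal.
        apply functional_extensionality; intros i. unfold set_coord. case_nat_tests; ring. }
      lra. }
    assert (slice_inf (fun i => u i + w i) - slice_inf u <= slice_inf w).
    { apply slice_inf_ge. intros t2.
      assert (slice_inf (fun i => u i + w i) - (p (set_coord K w t2) - t2 * c) <= slice_inf u)
        by (apply slice_inf_ge; intros t1; pose proof (Hsplit t1 t2); lra).
      lra. }
    lra.
  - intros t u Ht.
    assert (Hscale : forall s, p (set_coord K (fun i => t * u i) (t * s)) - (t * s) * c
                               = t * (p (set_coord K u s) - s * c)).
    { intros s. rewrite Rmult_minus_distr_l, <- p_hom by lra. f_equal; [|ring]. f_equal.
      apply functional_extensionality; intros i. unfold set_coord. case_nat_tests; ring. }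
    apply Rle_antisym.
    + cut (slice_inf (fun i => t * u i) / t <= slice_inf u).
      { intros Hq. apply Rmult_le_compat_r with (r := t) in Hq; [|lra].
        replace (slice_inf (fun i => t * u i) / t * t) with (slice_inf (fun i => t * u i)) in Hq
          by (field; lra). lra. }
      apply slice_inf_ge. intros s. pose proof (slice_inf_le (fun i => t * u i) (t * s)) as Hs.
      rewrite Hscale in Hs. apply Rmult_le_reg_r with t; auto.
      replace (slice_inf (fun i => t * u i) / t * t) with (slice_inf (fun i => t * u i))
        by (field; lra). lra.
    + apply slice_inf_ge. intros s. pose proof (slice_inf_le u (s / t)).
      pose proof (Hscale (s / t)) as Hs. replace (t * (s / t)) with s in Hs by (field; lra). nra.
Qed.

End MinimiseLastCoordinate.

Theorem hahn_banach_fin K p : sublinear K p ->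
  forall v, exists c, (forall u, dot K c u <= p u) /\ dot K c v = p v.
Proof.
  revert p. induction K as [|K IH]; intros p Hp v.
  - destruct Hp as [p_ext [_ p_hom]].
    assert (Hp0 : forall u, p u = 0).
    { intros u. rewrite (p_ext u (fun i => 2 * 0)) by lia.
      assert (p (fun i => 2 * 0) = 2 * p (fun i => 2 * 0)).
      { rewrite <- (p_hom 2) by lra. apply p_ext. intros; lia. }
      lra. }
    exists (fun _ => 0). unfold dot; simpl. split; [intros u|]; rewrite Hp0; lra.
  - pose proof Hp as [p_ext [p_add p_hom]].
    assert (Hrestore : forall u, set_coord K u (u K) = u).
    { intros u. apply functional_extensionality; intros i. unfold set_coord. case_nat_tests; congruence. }
    destruct (convex_has_subgradient (fun t => p (set_coord K v t)) (v K)) as [cK HcK].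
    { intros t d Ht Hd. rewrite <- !p_hom by lra. eapply Rle_trans; [|apply p_add].
      right. f_equal. apply functional_extensionality; intros i. unfold set_coord. case_nat_tests; ring. }
    assert (Hsub : forall t, p v - v K * cK <= p (set_coord K v t) - t * cK).
    { intros t. specialize (HcK t). rewrite Hrestore in HcK. lra. }
    assert (Hbounded : forall u, exists b, forall t, b <= p (set_coord K u t) - t * cK).
    { intros u. exists (p v - v K * cK - p (set_coord K (fun i => v i - u i) 0)). intros t.
      assert (p (set_coord K v t)
              <= p (set_coord K u t) + p (set_coord K (fun i => v i - u i) 0)).
      { eapply Rle_trans; [|apply p_add]. right. f_equal.
        apply functional_extensionality; intros i. unfold set_coord. case_nat_tests; ring. }
      pose proof (Hsub t). lra. }
    destruct (IH _ (slice_inf_sublinear K p cK Hp Hbounded) v) as [c' [Hc'dom Hc'v]].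
    exists (fun i => if Nat.eqb i K then cK else c' i).
    assert (Hdot : forall u, dot (S K) (fun i => if Nat.eqb i K then cK else c' i) u
                             = dot K c' u + cK * u K).
    { intros u. unfold dot; simpl. rewrite Nat.eqb_refl. f_equal. apply rsum_ext.
      intros i Hi. case_nat_tests; auto; lia. }
    split.
    + intros u. rewrite Hdot. pose proof (Hc'dom u).
      pose proof (slice_inf_le K p cK Hbounded u (u K)). rewrite Hrestore in *. lra.
    + rewrite Hdot, Hc'v. apply Rle_antisym.
      * pose proof (slice_inf_le K p cK Hbounded v (v K)). rewrite Hrestore in *. lra.
      * enough (p v - v K * cK <= slice_inf K p cK v) by lra.
        exact (slice_inf_ge K p cK Hbounded v _ Hsub).
Qed.

Lemma norming_functional K (N : (nat -> R) -> R) :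
  sublinear K N -> (forall u, N (fun i => - u i) = N u) ->
  forall v, exists phi, (forall u, Rabs (dot K phi u) <= N u) /\ dot K phi v = N v.
Proof.
  intros HN Hsym v. destruct (hahn_banach_fin K N HN v) as [phi [Hdom Hv]].
  exists phi. split; auto. intros u. apply Rabs_le. split.
  - pose proof (Hdom (fun i => - u i)). rewrite dot_opp, Hsym in *. lra.
  - apply Hdom.
Qed.

Definition restr (a : nat -> R) (p q : nat) : nat -> R :=
  fun i => if andb (Nat.leb p i) (Nat.leb i q) then a i else 0.

Definition spread (b : nat -> R) (p : nat -> nat) (m : nat) : nat -> R :=
  fun i => rsum (fun j => if Nat.eqb (p j) i then b j else 0) m.

Definition strictly_increasing_below (p : nat -> nat) (m : nat) : Prop :=
  forall i j, (i < j < m)%nat -> (p i < p j)%nat.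

Lemma strictly_increasing_below_le p m i j : strictly_increasing_below p m ->
  (i < m)%nat -> (j < m)%nat -> (p i <= p j)%nat <-> (i <= j)%nat.
Proof.
  intros Hp Hi Hj. split; intros Hij.
  - destruct (Nat.le_gt_cases i j); auto. pose proof (Hp j i ltac:(lia)); lia.
  - destruct (Nat.eq_dec i j); [subst; lia|]. pose proof (Hp i j ltac:(lia)); lia.
Qed.

Lemma spread_eq0 b p m i : (forall j, (j < m)%nat -> p j = i -> b j = 0) -> spread b p m i = 0.
Proof. intros H. apply rsum_eq0. intros j Hj. case_nat_tests; auto. Qed.

Lemma spread_ext b b' p m i : (forall j, (j < m)%nat -> b j = b' j) ->
  spread b p m i = spread b' p m i.
Proof. intros H. apply rsum_ext. intros j Hj. rewrite H; auto. Qed.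

Lemma spread_S b p m :
  spread b p (S m) = fun i => spread b p m i + (if Nat.eqb (p m) i then b m else 0).
Proof. reflexivity. Qed.

Lemma Rabs_spread_le1 b p m i : strictly_increasing_below p m ->
  (forall j, (j < m)%nat -> Rabs (b j) <= 1) -> Rabs (spread b p m i) <= 1.
Proof.
  induction m as [|m IH]; intros Hp Hb.
  - unfold spread; simpl. rewrite Rabs_R0; lra.
  - rewrite spread_S. destruct (Nat.eqb_spec (p m) i).
    + rewrite spread_eq0, Rplus_0_l by (intros j Hj Hji; pose proof (Hp j m ltac:(lia)); lia).
      apply Hb; lia.
    + rewrite Rplus_0_r. apply IH; [intros ? ? ?; apply Hp|intros; apply Hb]; lia.
Qed.

Lemma restr_spread b p m al be i :
  restr (spread b p m) al be i
  = spread (fun j => if andb (Nat.leb al (p j)) (Nat.leb (p j) be) then b j else 0) p m i.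
Proof.
  unfold restr. destruct (andb (Nat.leb al i) (Nat.leb i be)) eqn:Ec.
  - apply rsum_ext. intros j _. destruct (Nat.eqb_spec (p j) i); subst; rewrite ?Ec; auto.
  - symmetry. apply spread_eq0. intros j _ <-. rewrite Ec. auto.
Qed.

Lemma convex_mask_interval (mk : nat -> bool) m :
  (forall i t j, (i <= t <= j)%nat -> (j < m)%nat -> mk i = true -> mk j = true -> mk t = true) ->
  (forall j, (j < m)%nat -> mk j = false) \/
  exists p q, (p <= q < m)%nat /\
    forall j, (j < m)%nat -> mk j = andb (Nat.leb p j) (Nat.leb j q).
Proof.
  induction m as [|m IH]; intros Hc; [left; intros; lia|].
  destruct IH as [H0|[p [q [Hpq HJ]]]]; [intros i t j ? ?; apply Hc; lia| |].
  - destruct (mk m) eqn:Em.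
    + right. exists m, m. split; [lia|]. intros j Hj.
      destruct (Nat.eq_dec j m); [subst; rewrite Em|rewrite H0 by lia]; case_nat_tests; auto; lia.
    + left. intros j Hj. destruct (Nat.eq_dec j m); [subst; auto|apply H0; lia].
  - right. destruct (mk m) eqn:Em.
    + exists p, m. split; [lia|]. intros j Hj.
      destruct (Nat.eq_dec j m); [subst; rewrite Em; case_nat_tests; auto; lia|].
      destruct (Nat.le_gt_cases p j).
      * assert (mk j = true) as ->.
        { apply (Hc p j m); try lia; auto. rewrite HJ by lia. case_nat_tests; auto; lia. }
        case_nat_tests; auto; lia.
      * rewrite HJ by lia. case_nat_tests; auto; lia.
    + exists p, q. split; [lia|]. intros j Hj.
      destruct (Nat.eq_dec j m); [subst; rewrite Em; case_nat_tests; auto; lia|apply HJ; lia].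
Qed.

Section LinearCombinations.

Variable E : SNSpace.

Lemma vscal_0_l (x : E) : vscal E 0 x = vzero E.
Proof.
  set (z := vscal E 0 x).
  assert (Hz : vadd E z z = z) by (unfold z; rewrite <- vscal_distr_s; f_equal; ring).
  assert (H : vadd E (vadd E z z) (vscal E (-1) z) = vadd E z (vadd E z (vscal E (-1) z)))
    by (rewrite vadd_assoc; auto).
  rewrite Hz, !vadd_opp, vadd_0 in H. auto.
Qed.

Lemma vscal_0_r t : vscal E t (vzero E) = vzero E.
Proof. rewrite <- (vscal_0_l (vzero E)), vscal_assoc, Rmult_0_r. auto. Qed.

Lemma vadd_0_l (x : E) : vadd E (vzero E) x = x.
Proof. rewrite vadd_comm. apply vadd_0. Qed.

Lemma snorm_vzero : snorm E (vzero E) = 0.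
Proof. rewrite <- (vscal_0_l (vzero E)), snorm_scal, Rabs_R0. ring. Qed.

Lemma snorm_nonneg (x : E) : 0 <= snorm E x.
Proof.
  pose proof (snorm_triangle E x (vscal E (-1) x)).
  rewrite vadd_opp, snorm_vzero, snorm_scal, Rabs_m1 in H. lra.
Qed.

Variable e : nat -> E.

Lemma lincomb_add w u K :
  lincomb E (fun i => w i + u i) e K = vadd E (lincomb E w e K) (lincomb E u e K).
Proof.
  induction K; simpl; [rewrite vadd_0; auto|].
  rewrite IHK, vscal_distr_s, <- !vadd_assoc. f_equal. rewrite !vadd_assoc. f_equal.
  apply vadd_comm.
Qed.

Lemma lincomb_scal t w K : lincomb E (fun i => t * w i) e K = vscal E t (lincomb E w e K).
Proof.
  induction K; simpl; [rewrite vscal_0_r; auto|].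
  rewrite IHK, vscal_distr_v, vscal_assoc. auto.
Qed.

Lemma lincomb_ext w u K : (forall i, (i < K)%nat -> w i = u i) ->
  lincomb E w e K = lincomb E u e K.
Proof.
  induction K; intros H; simpl; auto.
  rewrite IHK, H; auto; intros; apply H; lia.
Qed.

Lemma lincomb_trunc w K K' : (K <= K')%nat -> (forall i, (K <= i < K')%nat -> w i = 0) ->
  lincomb E w e K' = lincomb E w e K.
Proof.
  induction 1 as [|K' HK IH]; intros H; auto. simpl.
  rewrite IH, (H K'), vscal_0_l, vadd_0; auto; try lia. intros; apply H; lia.
Qed.

Lemma lincomb_indicator j beta K :
  lincomb E (fun i => if Nat.eqb j i then beta else 0) e K
  = if Nat.ltb j K then vscal E beta (e j) else vzero E.
Proof.
  induction K; simpl; [case_nat_tests; auto; lia|].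
  rewrite IHK. destruct (Nat.eqb_spec j K).
  - subst. case_nat_tests; try lia. apply vadd_0_l.
  - rewrite vscal_0_l, vadd_0. case_nat_tests; auto; lia.
Qed.

Lemma lincomb_spread b p m K : (forall j, (j < m)%nat -> (p j < K)%nat) ->
  lincomb E (spread b p m) e K = lincomb E b (fun j => e (p j)) m.
Proof.
  induction m as [|m IH]; intros H.
  - simpl. rewrite (lincomb_ext _ (fun i => 0 * 0)) by (intros; unfold spread; simpl; ring).
    rewrite lincomb_scal. apply vscal_0_l.
  - rewrite spread_S, lincomb_add, IH, lincomb_indicator by (intros; apply H; lia).
    pose proof (H m ltac:(lia)). case_nat_tests; [auto|lia].
Qed.

End LinearCombinations.

(** * Bimonotone spreading norms on finitely supported sequences *)

(* [nrm w K] is the norm of [sum_{i<K} w_i e_i] for the unit vectors [e_i]. *)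
Record BimonotoneSpreadingNorm := {
  nrm : (nat -> R) -> nat -> R;
  unit_bound : R;
  unit_bound_nonneg : 0 <= unit_bound;
  nrm_ext : forall w u K, (forall i, (i < K)%nat -> w i = u i) -> nrm w K = nrm u K;
  nrm_trunc : forall w K K', (K <= K')%nat -> (forall i, (K <= i < K')%nat -> w i = 0) ->
    nrm w K' = nrm w K;
  nrm_add : forall w u K, nrm (fun i => w i + u i) K <= nrm w K + nrm u K;
  nrm_scal : forall t w K, nrm (fun i => t * w i) K = Rabs t * nrm w K;
  nrm_le_l1 : forall w K, nrm w K <= rsum (fun i => Rabs (w i) * unit_bound) K;
  nrm_spread : forall b p m K, strictly_increasing_below p m ->
    (forall j, (j < m)%nat -> (p j < K)%nat) -> nrm (spread b p m) K = nrm b m;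
  nrm_bimonotone : forall a p q n, (p <= q < n)%nat -> nrm (restr a p q) n <= nrm a n }.

Section BimonotoneSpreadingNormFacts.

Variable D : BimonotoneSpreadingNorm.

Lemma nrm_eq0 w K : (forall i, (i < K)%nat -> w i = 0) -> nrm D w K = 0.
Proof.
  intros H. rewrite (nrm_ext D w (fun i => 0 * 0)) by (intros; rewrite H; auto; ring).
  rewrite nrm_scal, Rabs_R0. ring.
Qed.

Lemma nrm_opp w K : nrm D (fun i => - w i) K = nrm D w K.
Proof.
  rewrite (nrm_ext D _ (fun i => -1 * w i)) by (intros; ring). rewrite nrm_scal, Rabs_m1. ring.
Qed.

Lemma nrm_nonneg w K : 0 <= nrm D w K.
Proof.
  pose proof (nrm_add D w (fun i => - w i) K).
  rewrite nrm_opp, nrm_eq0 in H by (intros; ring). lra.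
Qed.

Lemma nrm_le_add_sub w v K : nrm D w K <= nrm D v K + nrm D (fun i => w i - v i) K.
Proof. rewrite (nrm_ext D w (fun i => v i + (w i - v i))) by (intros; ring). apply nrm_add. Qed.

Lemma nrm_sublinear K : sublinear K (fun u => nrm D u K).
Proof.
  split; [|split].
  - intros; apply nrm_ext; auto.
  - intros; apply nrm_add.
  - intros t u Ht. rewrite nrm_scal, Rabs_right by lra. auto.
Qed.

Lemma nrm_spread_le b p m k : (1 <= m)%nat -> strictly_increasing_below p m ->
  (forall j, (j < m)%nat -> b j <> 0 -> (p j <= k)%nat) ->
  nrm D (spread b p m) (S k) = nrm D b m.
Proof.
  intros Hm Hp Hb. set (top := p (pred m)).
  assert (Htop : forall j, (j < m)%nat -> (p j <= top)%nat)
    by (intros; apply strictly_increasing_below_le with m; auto; lia).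
  rewrite <- (nrm_trunc D (spread b p m) (S k) (S k + S top)); [| lia |].
  - apply nrm_spread; auto. intros j Hj. pose proof (Htop j Hj). lia.
  - intros i Hi. apply spread_eq0. intros j Hj Hji.
    destruct (Req_dec (b j) 0); auto. pose proof (Hb j Hj H). lia.
Qed.

End BimonotoneSpreadingNormFacts.

Definition c00 := { v : nat -> R | exists k, forall j, (k <= j)%nat -> v j = 0 }.

Lemma c00_eq (x y : c00) : proj1_sig x = proj1_sig y -> x = y.
Proof. destruct x, y; simpl; intros ->. f_equal. apply proof_irrelevance. Qed.

Definition c00_zero : c00 := exist _ (fun _ => 0) (ex_intro _ 0%nat (fun j _ => eq_refl)).

Lemma c00_add_support (x y : c00) :
  exists k, forall j, (k <= j)%nat -> proj1_sig x j + proj1_sig y j = 0.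
Proof.
  destruct x as [x [kx Hx]], y as [y [ky Hy]]. exists (max kx ky). intros j Hj; simpl.
  rewrite Hx, Hy by lia. ring.
Qed.

Definition c00_add (x y : c00) : c00 :=
  exist _ (fun j => proj1_sig x j + proj1_sig y j) (c00_add_support x y).

Lemma c00_scal_support t (x : c00) : exists k, forall j, (k <= j)%nat -> t * proj1_sig x j = 0.
Proof. destruct x as [x [kx Hx]]. exists kx. intros j Hj; simpl. rewrite Hx by lia. ring. Qed.

Definition c00_scal (t : R) (x : c00) : c00 :=
  exist _ (fun j => t * proj1_sig x j) (c00_scal_support t x).

Definition c00_bound (x : c00) : nat :=
  proj1_sig (constructive_indefinite_description _ (proj2_sig x)).

Lemma c00_bound_spec x j : (c00_bound x <= j)%nat -> proj1_sig x j = 0.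
Proof. unfold c00_bound. destruct (constructive_indefinite_description _ _); simpl; auto. Qed.

Section C00Space.

Variable D : BimonotoneSpreadingNorm.

Definition c00_norm (x : c00) : R := nrm D (proj1_sig x) (c00_bound x).

Lemma c00_norm_eq x K : (forall j, (K <= j)%nat -> proj1_sig x j = 0) ->
  c00_norm x = nrm D (proj1_sig x) K.
Proof.
  intros HK. unfold c00_norm. set (K' := max K (c00_bound x)).
  rewrite <- (nrm_trunc D _ (c00_bound x) K'), <- (nrm_trunc D _ K K'); auto; try lia;
    intros; [apply HK | apply c00_bound_spec]; lia.
Qed.

Lemma c00_norm_scal a x : c00_norm (c00_scal a x) = Rabs a * c00_norm x.
Proof.
  rewrite (c00_norm_eq _ (c00_bound x)); [apply nrm_scal|].
  intros j Hj; simpl. rewrite c00_bound_spec by auto. ring.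
Qed.

Lemma c00_norm_triangle x y : c00_norm (c00_add x y) <= c00_norm x + c00_norm y.
Proof.
  set (K := max (c00_bound x) (c00_bound y)).
  rewrite (c00_norm_eq (c00_add x y) K), (c00_norm_eq x K), (c00_norm_eq y K);
    [apply nrm_add | ..]; intros; simpl; rewrite ?c00_bound_spec by lia; ring.
Qed.

Ltac c00_ext := intros; apply c00_eq; simpl; apply functional_extensionality; intros; ring.

Definition c00_space : SNSpace :=
  {| car := c00; vzero := c00_zero; vadd := c00_add; vscal := c00_scal; snorm := c00_norm;
     vadd_assoc := ltac:(c00_ext); vadd_comm := ltac:(c00_ext); vadd_0 := ltac:(c00_ext);
     vadd_opp := ltac:(c00_ext); vscal_1 := ltac:(c00_ext); vscal_assoc := ltac:(c00_ext);
     vscal_distr_v := ltac:(c00_ext); vscal_distr_s := ltac:(c00_ext);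
     snorm_scal := c00_norm_scal; snorm_triangle := c00_norm_triangle |}.

Lemma unit_vec_support j : exists k, forall i, (k <= i)%nat -> (if Nat.eqb j i then 1 else 0) = 0.
Proof. exists (S j). intros i Hi. case_nat_tests; auto; lia. Qed.

Definition unit_vec (j : nat) : c00_space := exist _ _ (unit_vec_support j).

Lemma lincomb_unit_vec a n :
  proj1_sig (lincomb c00_space a unit_vec n : c00) = fun i => if Nat.ltb i n then a i else 0.
Proof.
  induction n; simpl; apply functional_extensionality; intros i; [case_nat_tests; auto; lia|].
  rewrite IHn. case_nat_tests; simpl; try lia; subst; ring.
Qed.

Lemma snorm_lincomb_unit_vec a n : snorm c00_space (lincomb c00_space a unit_vec n) = nrm D a n.
Proof.
  simpl. rewrite (c00_norm_eq _ n), lincomb_unit_vec.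
  - apply nrm_ext. intros i Hi. case_nat_tests; auto; lia.
  - intros j Hj. rewrite lincomb_unit_vec. case_nat_tests; auto; lia.
Qed.

Lemma unit_vec_hamel_basis : hamel_basis c00_space unit_vec.
Proof.
  split.
  - intros a k H j Hj. apply (f_equal (fun x : c00 => proj1_sig x j)) in H.
    simpl in H. rewrite lincomb_unit_vec in H. revert H. case_nat_tests; auto; lia.
  - intros x. exists (proj1_sig (x : c00)), (c00_bound x). apply c00_eq.
    rewrite lincomb_unit_vec. apply functional_extensionality; intros i.
    case_nat_tests; auto. rewrite c00_bound_spec; auto; lia.
Qed.

End C00Space.

(** * Finite norming nets *)

Definition grid_values (q : nat) : list R := map (fun j => INR j / INR q - 1) (seq 0 (2 * q + 1)).

Lemma grid_values_approx q x : (1 <= q)%nat -> -1 <= x <= 1 ->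
  exists t, In t (grid_values q) /\ Rabs (x - t) <= 1 / INR q.
Proof.
  intros Hq Hx. assert (Hq' : 0 < INR q) by (apply lt_0_INR; lia).
  assert (Hstep : forall N y, 0 <= y <= INR N / INR q ->
            exists j, (j <= N)%nat /\ Rabs (y - INR j / INR q) <= 1 / INR q).
  { induction N as [|N IH]; intros y Hy.
    - exists 0%nat. split; [lia|]. simpl in *. unfold Rdiv in *. rewrite Rmult_0_l in *.
      replace (y - 0) with 0 by lra. rewrite Rabs_R0. apply Rlt_le, Rdiv_lt_0_compat; lra.
    - destruct (Rle_dec y (INR N / INR q)).
      + destruct (IH y) as [j [Hj1 Hj2]]; [lra|]. exists j; split; [lia|auto].
      + exists (S N). split; [lia|]. rewrite S_INR in *.
        replace ((INR N + 1) / INR q) with (INR N / INR q + 1 / INR q) in * by (field; lra).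
        apply Rabs_le. split; lra. }
  destruct (Hstep (2 * q)%nat (x + 1)) as [j [Hj1 Hj2]].
  { rewrite mult_INR. replace (INR 2 * INR q / INR q) with 2 by (simpl; field; lra). lra. }
  exists (INR j / INR q - 1). split.
  - apply in_map_iff. exists j. split; auto. apply in_seq. lia.
  - replace (x - (INR j / INR q - 1)) with (x + 1 - INR j / INR q) by ring. auto.
Qed.

Fixpoint grid (q d : nat) : list (nat -> R) :=
  match d with
  | O => [fun _ => 0]
  | S d' => flat_map (fun v => map (fun t => set_coord d' v t) (grid_values q)) (grid q d')
  end.

Lemma grid_approx q d w : (1 <= q)%nat -> (forall i, (i < d)%nat -> -1 <= w i <= 1) ->
  exists v, In v (grid q d) /\ forall i, (i < d)%nat -> Rabs (w i - v i) <= 1 / INR q.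
Proof.
  intros Hq. induction d as [|d IH]; intros Hw.
  - exists (fun _ => 0). split; [left; auto|]. intros; lia.
  - destruct IH as [v [Hv1 Hv2]]; [intros; apply Hw; lia|].
    destruct (grid_values_approx q (w d) Hq (Hw d ltac:(lia))) as [t [Ht1 Ht2]].
    exists (set_coord d v t). split.
    + apply in_flat_map. exists v. split; auto. apply in_map_iff. exists t; auto.
    + intros i Hi. unfold set_coord. destruct (Nat.eqb_spec i d); [subst; auto|]. apply Hv2; lia.
Qed.

Section NormingNets.

Variable D : BimonotoneSpreadingNorm.

Definition dominated (k : nat) (phi : nat -> R) : Prop :=
  forall u, Rabs (dot (S k) phi u) <= nrm D u (S k).

Definition norming_functional_at (k : nat) (v : nat -> R) : nat -> R :=
  proj1_sig (constructive_indefinite_description _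
    (norming_functional (S k) _ (nrm_sublinear D (S k)) (fun u => nrm_opp D u (S k)) v)).

Lemma norming_functional_at_spec k v :
  dominated k (norming_functional_at k v) /\
  dot (S k) (norming_functional_at k v) v = nrm D v (S k).
Proof. unfold norming_functional_at. destruct (constructive_indefinite_description _ _); auto. Qed.

(* The grid has mesh [1/(k+1)^2] in each of the [k+1] coordinates, so moving [w] to the
   nearest grid point changes both its norm and [phi w] by at most [unit_bound/(k+1)]. *)
Lemma norming_net_exists k : exists L : list (nat -> R),
  (forall phi, In phi L -> dominated k phi) /\
  forall w, (forall i, (i <= k)%nat -> Rabs (w i) <= 1) ->
    exists phi, In phi L /\ nrm D w (S k) - 2 * unit_bound D / INR (S k) <= dot (S k) phi w.
Proof.
  set (q := (S k * S k)%nat). assert (Hq : (1 <= q)%nat) by (unfold q; lia).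
  assert (HSk : 0 < INR (S k)) by (apply lt_0_INR; lia).
  exists (map (norming_functional_at k) (grid q (S k))). split.
  { intros phi Hphi. apply in_map_iff in Hphi. destruct Hphi as [v [<- _]].
    apply norming_functional_at_spec. }
  intros w Hw. destruct (grid_approx q (S k) w Hq) as [v [Hv Hwv]].
  { intros i Hi. apply Rabs_le_inv, Hw. lia. }
  exists (norming_functional_at k v). split; [apply in_map; auto|].
  destruct (norming_functional_at_spec k v) as [Hdom Hnorming].
  set (phi := norming_functional_at k v) in *.
  assert (Hsplit : dot (S k) phi w = dot (S k) phi v + dot (S k) phi (fun i => w i - v i))
    by (rewrite <- dot_add; apply rsum_ext; intros; ring).
  assert (Hdiff : nrm D (fun i => w i - v i) (S k) <= unit_bound D / INR (S k)).
  { eapply Rle_trans; [apply nrm_le_l1|]. eapply Rle_trans.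
    - apply rsum_le_const with (B := 1 / INR q * unit_bound D). intros i Hi.
      apply Rmult_le_compat_r; [apply unit_bound_nonneg|]. apply Hwv; auto.
    - right. unfold q. rewrite mult_INR. field. lra. }
  pose proof (nrm_le_add_sub D w v (S k)).
  pose proof (Rabs_le_inv _ _ (Hdom (fun i => w i - v i))).
  rewrite Hsplit, Hnorming. lra.
Qed.

Definition norming_net (k : nat) : list (nat -> R) :=
  proj1_sig (constructive_indefinite_description _ (norming_net_exists k)).

Lemma norming_net_spec k :
  (forall phi, In phi (norming_net k) -> dominated k phi) /\
  forall w, (forall i, (i <= k)%nat -> Rabs (w i) <= 1) ->
    exists phi, In phi (norming_net k) /\
      nrm D w (S k) - 2 * unit_bound D / INR (S k) <= dot (S k) phi w.
Proof. unfold norming_net. destruct (constructive_indefinite_description _ _); auto. Qed.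

(* Block [k] has one more position than [norming_net k] (the extra one carries the zero
   functional), so that every block is nonempty. *)
Fixpoint block_start (k : nat) : nat :=
  match k with O => O | S k' => (block_start k' + S (length (norming_net k')))%nat end.

Fixpoint level (n : nat) : nat :=
  match n with
  | O => O
  | S n' => if Nat.leb (block_start (S (level n'))) (S n') then S (level n') else level n'
  end.

Lemma block_start_mono k k' : (k <= k')%nat -> (block_start k <= block_start k')%nat.
Proof. induction 1; auto. simpl. lia. Qed.

Lemma level_spec n : (block_start (level n) <= n < block_start (S (level n)))%nat.
Proof.
  induction n; [simpl; lia|]. cbn [level].
  destruct (Nat.leb_spec (block_start (S (level n))) (S n)); [|lia].
  cbn [block_start] in *. lia.
Qed.

Lemma level_unique k n : (block_start k <= n < block_start (S k))%nat -> level n = k.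
Proof.
  intros H. pose proof (level_spec n).
  destruct (Nat.lt_trichotomy (level n) k) as [Hl|[He|Hg]]; auto.
  - pose proof (block_start_mono (S (level n)) k ltac:(lia)). lia.
  - pose proof (block_start_mono (S k) (level n) ltac:(lia)). lia.
Qed.

Lemma level_ge k n : (block_start k <= n)%nat -> (k <= level n)%nat.
Proof.
  intros H. pose proof (level_spec n). destruct (Nat.le_gt_cases k (level n)); auto.
  pose proof (block_start_mono (S (level n)) k ltac:(lia)). lia.
Qed.

Definition net_functional (n : nat) : nat -> R :=
  nth (n - block_start (level n)) (norming_net (level n)) (fun _ => 0).

Lemma net_functional_dominated n : dominated (level n) (net_functional n).
Proof.
  unfold net_functional. destruct (Nat.lt_ge_cases (n - block_start (level n))
                                    (length (norming_net (level n)))).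
  - apply (proj1 (norming_net_spec _)). apply nth_In; auto.
  - rewrite nth_overflow by auto. intros u. unfold dot.
    rewrite rsum_eq0, Rabs_R0 by (intros; ring). apply nrm_nonneg.
Qed.

Lemma net_functional_onto k phi : In phi (norming_net k) ->
  exists n, level n = k /\ net_functional n = phi.
Proof.
  intros Hphi. destruct (In_nth _ _ (fun _ => 0) Hphi) as [r [Hr <-]].
  exists (block_start k + r)%nat.
  assert (Hlev : level (block_start k + r) = k) by (apply level_unique; simpl; lia).
  split; auto. unfold net_functional. rewrite Hlev. f_equal. lia.
Qed.

Definition x_seq (s1 s2 n : nat) : R :=
  if andb (Nat.leb s1 (level n)) (Nat.ltb (level n) s2) then net_functional n s1 else 0.

Lemma x_seq_c0 s1 s2 : in_c0 (x_seq s1 s2).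
Proof.
  intros eps Heps. exists (block_start s2). intros n Hn. unfold x_seq, R_dist.
  pose proof (level_ge s2 n ltac:(lia)).
  case_nat_tests; simpl; try lia; rewrite Rminus_0_r, Rabs_R0; auto.
Qed.

End NormingNets.

Lemma plegma_increasing M s m : plegma M s m -> forall i j, (i < j < m)%nat ->
  (fst (s i) < fst (s j))%nat /\ (snd (s i) < snd (s j))%nat.
Proof.
  intros [_ [Hstep _]] i j Hij. induction j as [|j IH]; [lia|].
  destruct (Nat.eq_dec i j); [subst; apply Hstep; lia|].
  destruct IH as [A B]; [lia|]. destruct (Hstep j ltac:(lia)). lia.
Qed.

Lemma plegma_fst_increasing M s m : plegma M s m ->
  strictly_increasing_below (fun j => fst (s j)) m.
Proof. intros Hp i j Hij. apply (plegma_increasing M s m Hp); auto. Qed.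

Lemma plegma_fst_lt_snd M s m i j : plegma M s m -> (i < m)%nat -> (j < m)%nat ->
  (fst (s i) < snd (s j))%nat.
Proof.
  intros Hp Hi Hj. pose proof Hp as [_ [_ Hcross]]. specialize (Hcross ltac:(lia)).
  assert (fst (s i) <= fst (s (pred m)))%nat
    by (apply (strictly_increasing_below_le (fun j => fst (s j)) m); eauto using plegma_fst_increasing; lia).
  assert (snd (s 0%nat) <= snd (s j))%nat.
  { destruct j; [lia|]. pose proof (plegma_increasing M s m Hp 0 (S j) ltac:(lia)). lia. }
  lia.
Qed.

Lemma plegma_level_mask_convex M s m k : plegma M s m ->
  forall i t j, (i <= t <= j)%nat -> (j < m)%nat ->
    andb (Nat.leb (fst (s i)) k) (Nat.ltb k (snd (s i))) = true ->
    andb (Nat.leb (fst (s j)) k) (Nat.ltb k (snd (s j))) = true ->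
    andb (Nat.leb (fst (s t)) k) (Nat.ltb k (snd (s t))) = true.
Proof.
  intros Hp i t j Hitj Hj.
  assert (fst (s t) <= fst (s j))%nat
    by (apply (strictly_increasing_below_le (fun j => fst (s j)) m);
        eauto using plegma_fst_increasing; lia).
  assert (snd (s i) <= snd (s t))%nat.
  { destruct (Nat.eq_dec i t); [subst; lia|].
    pose proof (plegma_increasing M s m Hp i t ltac:(lia)). lia. }
  case_nat_tests; simpl; intros; try discriminate; auto; lia.
Qed.

(** * The unit vector basis is a 2-spreading model of c_0 *)

Lemma supnorm_between y U L : (forall n, Rabs (y n) <= U) -> (exists n, L <= Rabs (y n)) ->
  L <= supnorm y <= U.
Proof.
  intros HU [n0 HL].
  assert (Hs : is_lub (fun z => exists n, z = Rabs (y n)) (supnorm y)).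
  { unfold supnorm. apply epsilon_spec.
    destruct (completeness (fun z => exists n, z = Rabs (y n))) as [r Hr].
    - exists U. intros z [n ->]. auto.
    - exists (Rabs (y 0%nat)), 0%nat; auto.
    - exists r; auto. }
  destruct Hs as [Hub Hlub]. split.
  - eapply Rle_trans; [apply HL|]. apply Hub. exists n0; auto.
  - apply Hlub. intros z [n ->]. auto.
Qed.

Section UnitVectorSpreadingModel.

Variable D : BimonotoneSpreadingNorm.

Definition level_mask (s : nat -> nat * nat) (k : nat) (a : nat -> R) : nat -> R :=
  fun j => if andb (Nat.leb (fst (s j)) k) (Nat.ltb k (snd (s j))) then a j else 0.

Lemma rsum_x_seq (s : nat -> nat * nat) a m n :
  rsum (fun j => a j * x_seq D (fst (s j)) (snd (s j)) n) m
  = dot (S (level D n)) (net_functional D n)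
        (spread (level_mask s (level D n) a) (fun j => fst (s j)) m).
Proof.
  induction m as [|m IH]; [unfold dot, spread; simpl; rewrite rsum_eq0; auto; intros; ring|].
  rewrite spread_S, dot_add, <- IH. simpl. f_equal.
  unfold dot. rewrite (rsum_ext _ (fun i => if Nat.eqb (fst (s m)) i
                                     then net_functional D n i * level_mask s (level D n) a m else 0))
    by (intros; case_nat_tests; ring).
  rewrite rsum_indicator. unfold x_seq, level_mask. case_nat_tests; simpl; try lia; ring.
Qed.

Lemma x_seq_plegma_upper M s m a n : (1 <= m)%nat -> plegma M s m ->
  Rabs (rsum (fun j => a j * x_seq D (fst (s j)) (snd (s j)) n) m) <= nrm D a m.
Proof.
  intros Hm Hp. rewrite rsum_x_seq. set (k := level D n).
  eapply Rle_trans; [apply net_functional_dominated|]. fold k.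
  rewrite nrm_spread_le; [| auto | eapply plegma_fst_increasing; eauto |].
  2:{ intros j Hj. unfold level_mask. case_nat_tests; simpl; intros; auto; lia || congruence. }
  destruct (convex_mask_interval (fun j => andb (Nat.leb (fst (s j)) k) (Nat.ltb k (snd (s j)))) m
              (plegma_level_mask_convex M s m k Hp)) as [Hnone|[p [q [Hpq Hint]]]].
  - rewrite nrm_eq0; [apply nrm_nonneg|]. intros i Hi. unfold level_mask. rewrite Hnone; auto.
  - eapply Rle_trans; [|apply (nrm_bimonotone D a p q m Hpq)]. right. apply nrm_ext.
    intros i Hi. unfold level_mask, restr. rewrite Hint; auto.
Qed.

(* The last first coordinate [k0 = s_{m-1}(1)] is a level at which every [s_j] is active,
   and some functional of the net at that level almost norms the (spread) vector [a]. *)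
Lemma x_seq_plegma_lower M s m a : (1 <= m)%nat -> plegma M s m ->
  (forall j, (j < m)%nat -> -1 <= a j <= 1) ->
  exists n, nrm D a m - 2 * unit_bound D / INR (S (fst (s (pred m))))
            <= Rabs (rsum (fun j => a j * x_seq D (fst (s j)) (snd (s j)) n) m).
Proof.
  intros Hm Hp Ha. set (k0 := fst (s (pred m))).
  pose proof (plegma_fst_increasing M s m Hp) as Hinc.
  assert (Hle_k0 : forall j, (j < m)%nat -> (fst (s j) <= k0)%nat)
    by (intros; apply (strictly_increasing_below_le (fun j => fst (s j)) m); auto; lia).
  assert (Hmask : forall j, (j < m)%nat -> level_mask s k0 a j = a j).
  { intros j Hj. pose proof (Hle_k0 j Hj).
    pose proof (plegma_fst_lt_snd M s m (pred m) j Hp ltac:(lia) Hj).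
    unfold level_mask, k0 in *. case_nat_tests; simpl; auto; lia. }
  set (w := spread (level_mask s k0 a) (fun j => fst (s j)) m).
  destruct (proj2 (norming_net_spec D k0) w) as [phi [Hphi Hnorming]].
  { intros i Hi. apply Rabs_spread_le1; auto. intros j Hj. rewrite Hmask by auto.
    apply Rabs_le, Ha; auto. }
  destruct (net_functional_onto D k0 phi Hphi) as [n [Hlev Hn]].
  exists n. rewrite rsum_x_seq, Hlev, Hn. fold w.
  assert (Hw : nrm D w (S k0) = nrm D a m).
  { unfold w. rewrite nrm_spread_le; auto. apply nrm_ext; auto. }
  rewrite <- Hw. eapply Rle_trans; [apply Hnorming|]. apply Rle_abs.
Qed.

Lemma unit_bound_decay_cvg : Un_cv (fun l => (2 * unit_bound D + 1) / (INR l + 1)) 0.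
Proof.
  pose proof (unit_bound_nonneg D) as Hc.
  intros eps Heps. destruct (INR_unbounded ((2 * unit_bound D + 1) / eps)) as [N HN].
  exists N. intros n Hn. unfold R_dist. rewrite Rminus_0_r.
  assert (HnN : INR N <= INR n) by (apply le_INR; lia).
  pose proof (pos_INR n).
  rewrite Rabs_right by (apply Rle_ge, Rlt_le, Rdiv_lt_0_compat; lra).
  apply Rmult_lt_reg_r with (INR n + 1); [lra|].
  replace ((2 * unit_bound D + 1) / (INR n + 1) * (INR n + 1)) with (2 * unit_bound D + 1)
    by (field; lra).
  assert ((2 * unit_bound D + 1) / eps * eps = 2 * unit_bound D + 1) by (field; lra). nra.
Qed.

Theorem unit_vec_in_SM2_c0 : in_SM2_c0 (c00_space D) (unit_vec D).
Proof.
  split; [apply unit_vec_hamel_basis|].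
  exists (x_seq D), S. split; [intros; apply x_seq_c0|]. split; [intros i j H; lia|].
  pose proof (unit_bound_nonneg D) as Hc.
  exists (fun l => (2 * unit_bound D + 1) / (INR l + 1)). split; [|split].
  - intros l. apply Rdiv_lt_0_compat; pose proof (pos_INR l); lra.
  - apply unit_bound_decay_cvg.
  - intros l m s a Hl Hm Hp Hstart Ha. rewrite snorm_lincomb_unit_vec.
    set (k0 := fst (s (pred m))).
    assert (Hk0 : (l <= k0)%nat).
    { assert (fst (s 0%nat) <= k0)%nat
        by (apply (strictly_increasing_below_le (fun j => fst (s j)) m);
            eauto using plegma_fst_increasing; lia).
      simpl in Hstart. lia. }
    assert (Herr : 2 * unit_bound D / INR (S k0) <= (2 * unit_bound D + 1) / (INR l + 1)).
    { assert (INR l + 1 <= INR (S k0)) by (rewrite S_INR; apply Rplus_le_compat_r, le_INR; auto).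
      pose proof (pos_INR l). unfold Rdiv.
      apply Rle_trans with (2 * unit_bound D * / (INR l + 1)).
      - apply Rmult_le_compat_l; [lra|]. apply Rinv_le_contravar; lra.
      - apply Rmult_le_compat_r; [apply Rlt_le, Rinv_0_lt_compat|]; lra. }
    destruct (supnorm_between (fun n => rsum (fun j => a j * x_seq D (fst (s j)) (snd (s j)) n) m)
               (nrm D a m) (nrm D a m - 2 * unit_bound D / INR (S k0))) as [Hlow Hup].
    + intros n. apply (x_seq_plegma_upper S); auto. lia.
    + apply (x_seq_plegma_lower S); auto. lia.
    + apply Rabs_le. split; lra.
Qed.

End UnitVectorSpreadingModel.

(** * Spreading sequences and their interval renorming *)

Definition Rmax_below (f : nat -> R) (n : nat) : R :=
  fold_right Rmax 0 (map f (seq 0 n)).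

Lemma Rmax_below_ge f n i : (i < n)%nat -> f i <= Rmax_below f n.
Proof.
  unfold Rmax_below. intros Hi. assert (Hin : In i (seq 0 n)) by (apply in_seq; lia).
  induction (seq 0 n) as [|x l IH]; simpl in *; [tauto|].
  destruct Hin as [<-|Hin]; [apply Rmax_l|]. eapply Rle_trans; [apply IH, Hin|apply Rmax_r].
Qed.

Lemma Rmax_below_le f n U : 0 <= U -> (forall i, (i < n)%nat -> f i <= U) -> Rmax_below f n <= U.
Proof.
  unfold Rmax_below. intros HU Hf.
  assert (Hl : forall i, In i (seq 0 n) -> f i <= U) by (intros i Hi; apply in_seq in Hi; apply Hf; lia).
  induction (seq 0 n) as [|x l IH]; simpl; auto.
  apply Rmax_lub; [apply Hl; left|apply IH; intros; apply Hl; right]; auto.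
Qed.

Lemma Rmax_below_nonneg f n : 0 <= Rmax_below f n.
Proof. unfold Rmax_below. induction (seq 0 n); simpl; [lra|]. eapply Rle_trans; [|apply Rmax_r]; auto. Qed.

Section SpreadingSequence.

Variables (E : SNSpace) (e : nat -> E).

Definition coef_norm (w : nat -> R) (K : nat) : R := snorm E (lincomb E w e K).

Lemma coef_norm_ext w u K : (forall i, (i < K)%nat -> w i = u i) -> coef_norm w K = coef_norm u K.
Proof. intros. unfold coef_norm. rewrite (lincomb_ext E e w u K); auto. Qed.

Lemma coef_norm_trunc w K K' : (K <= K')%nat -> (forall i, (K <= i < K')%nat -> w i = 0) ->
  coef_norm w K' = coef_norm w K.
Proof. intros. unfold coef_norm. rewrite (lincomb_trunc E e w K K'); auto. Qed.

Lemma coef_norm_add w u K : coef_norm (fun i => w i + u i) K <= coef_norm w K + coef_norm u K.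
Proof. unfold coef_norm. rewrite lincomb_add. apply snorm_triangle. Qed.

Lemma coef_norm_scal t w K : coef_norm (fun i => t * w i) K = Rabs t * coef_norm w K.
Proof. unfold coef_norm. rewrite lincomb_scal. apply snorm_scal. Qed.

Lemma coef_norm_eq0 w K : (forall i, (i < K)%nat -> w i = 0) -> coef_norm w K = 0.
Proof.
  intros H. rewrite (coef_norm_ext w (fun i => 0 * 0)) by (intros; rewrite H; auto; ring).
  rewrite coef_norm_scal, Rabs_R0. ring.
Qed.

Hypothesis e_spreading : spreading E e.

Lemma spreading_snorm_const i : snorm E (e i) = snorm E (e 0%nat).
Proof.
  pose proof (e_spreading 1%nat (fun _ => i) (fun _ => 1) ltac:(intros; lia)) as H.
  simpl in H. rewrite !vadd_0_l, !vscal_1 in H. auto.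
Qed.

Lemma coef_norm_le_l1 w K : coef_norm w K <= rsum (fun i => Rabs (w i) * snorm E (e 0%nat)) K.
Proof.
  unfold coef_norm. induction K; simpl; [rewrite snorm_vzero; lra|].
  eapply Rle_trans; [apply snorm_triangle|]. rewrite snorm_scal, (spreading_snorm_const K). lra.
Qed.

Lemma coef_norm_spread b p m K : strictly_increasing_below p m ->
  (forall j, (j < m)%nat -> (p j < K)%nat) -> coef_norm (spread b p m) K = coef_norm b m.
Proof.
  intros Hp HK. unfold coef_norm. rewrite lincomb_spread by auto. symmetry. apply e_spreading. auto.
Qed.

Definition coef_spreading_norm (e_bimonotone : bimonotone E e) : BimonotoneSpreadingNorm :=
  {| nrm := coef_norm; unit_bound := snorm E (e 0%nat);
     unit_bound_nonneg := snorm_nonneg E (e 0%nat);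
     nrm_ext := coef_norm_ext; nrm_trunc := coef_norm_trunc; nrm_add := coef_norm_add;
     nrm_scal := coef_norm_scal; nrm_le_l1 := coef_norm_le_l1; nrm_spread := coef_norm_spread;
     nrm_bimonotone := e_bimonotone |}.

Definition interval_norm (w : nat -> R) (K : nat) : R :=
  Rmax_below (fun q => Rmax_below (fun p => coef_norm (restr w p q) K) (S q)) K.

Lemma interval_norm_ge w K p q : (p <= q < K)%nat -> coef_norm (restr w p q) K <= interval_norm w K.
Proof.
  intros Hpq. unfold interval_norm.
  eapply Rle_trans; [|apply (Rmax_below_ge _ K q); lia].
  apply (Rmax_below_ge (fun p => coef_norm (restr w p q) K) (S q) p). lia.
Qed.

Lemma interval_norm_le w K U : 0 <= U ->
  (forall p q, (p <= q < K)%nat -> coef_norm (restr w p q) K <= U) -> interval_norm w K <= U.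
Proof.
  intros HU H. apply Rmax_below_le; auto. intros q Hq.
  apply Rmax_below_le; auto. intros p Hp. apply H. lia.
Qed.

Lemma interval_norm_nonneg w K : 0 <= interval_norm w K.
Proof. apply Rmax_below_nonneg. Qed.

Lemma interval_norm_ext w u K : (forall i, (i < K)%nat -> w i = u i) ->
  interval_norm w K = interval_norm u K.
Proof.
  intros H. apply Rle_antisym; apply interval_norm_le; try apply interval_norm_nonneg;
    intros p q Hpq; [rewrite (coef_norm_ext _ (restr u p q))|rewrite (coef_norm_ext _ (restr w p q))];
    try (apply interval_norm_ge; auto); intros i Hi; unfold restr; rewrite H; auto.
Qed.

Lemma coef_norm_restr_trunc w p q K K' : (K <= K')%nat ->
  (forall i, (K <= i < K')%nat -> w i = 0) ->
  coef_norm (restr w p q) K' = coef_norm (restr w p q) K.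
Proof.
  intros HK Hw. apply coef_norm_trunc; auto. intros i Hi. unfold restr.
  rewrite Hw by auto. destruct (_ && _)%bool; auto.
Qed.

Lemma interval_norm_trunc w K K' : (K <= K')%nat -> (forall i, (K <= i < K')%nat -> w i = 0) ->
  interval_norm w K' = interval_norm w K.
Proof.
  intros HK Hw. apply Rle_antisym; apply interval_norm_le; try apply interval_norm_nonneg;
    intros p q Hpq.
  - rewrite (coef_norm_restr_trunc w p q K K') by auto.
    destruct (Nat.lt_ge_cases q K); [apply interval_norm_ge; lia|].
    destruct (Nat.lt_ge_cases p K).
    + rewrite (coef_norm_ext _ (restr w p (pred K)))
        by (intros i Hi; unfold restr; case_nat_tests; simpl; auto; lia).
      apply interval_norm_ge; lia.
    + rewrite coef_norm_eq0 by (intros i Hi; unfold restr; case_nat_tests; simpl; auto; lia).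
      apply interval_norm_nonneg.
  - rewrite <- (coef_norm_restr_trunc w p q K K') by auto. apply interval_norm_ge; lia.
Qed.

Lemma interval_norm_add w u K :
  interval_norm (fun i => w i + u i) K <= interval_norm w K + interval_norm u K.
Proof.
  pose proof (interval_norm_nonneg w K); pose proof (interval_norm_nonneg u K).
  apply interval_norm_le; [lra|].
  intros p q Hpq. rewrite (coef_norm_ext _ (fun i => restr w p q i + restr u p q i))
    by (intros; unfold restr; destruct (_ && _)%bool; ring).
  eapply Rle_trans; [apply coef_norm_add|]. apply Rplus_le_compat; apply interval_norm_ge; auto.
Qed.

Lemma interval_norm_scal_le t w K : interval_norm (fun i => t * w i) K <= Rabs t * interval_norm w K.
Proof.
  apply interval_norm_le; [pose proof (interval_norm_nonneg w K); pose proof (Rabs_pos t); nra|].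
  intros p q Hpq. rewrite (coef_norm_ext _ (fun i => t * restr w p q i))
    by (intros; unfold restr; destruct (_ && _)%bool; ring).
  rewrite coef_norm_scal. apply Rmult_le_compat_l; [apply Rabs_pos|]. apply interval_norm_ge; auto.
Qed.

Lemma interval_norm_scal t w K : interval_norm (fun i => t * w i) K = Rabs t * interval_norm w K.
Proof.
  apply Rle_antisym; [apply interval_norm_scal_le|].
  destruct (Req_dec t 0) as [->|Ht].
  { rewrite Rabs_R0, Rmult_0_l. apply interval_norm_nonneg. }
  pose proof (interval_norm_scal_le (/ t) (fun i => t * w i) K) as H.
  rewrite (interval_norm_ext (fun i => / t * (t * w i)) w) in H by (intros; field; auto).
  rewrite Rabs_inv in H. assert (0 < Rabs t) by (apply Rabs_pos_lt; auto).
  apply Rmult_le_compat_l with (r := Rabs t) in H; [|lra].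
  replace (Rabs t * (/ Rabs t * interval_norm (fun i => t * w i) K))
    with (interval_norm (fun i => t * w i) K) in H by (field; lra).
  lra.
Qed.

Lemma interval_norm_le_l1 w K :
  interval_norm w K <= rsum (fun i => Rabs (w i) * snorm E (e 0%nat)) K.
Proof.
  apply interval_norm_le.
  - apply rsum_nonneg. intros. pose proof (Rabs_pos (w i)). pose proof (snorm_nonneg E (e 0%nat)). nra.
  - intros p q Hpq. eapply Rle_trans; [apply coef_norm_le_l1|]. apply rsum_le. intros i _.
    apply Rmult_le_compat_r; [apply snorm_nonneg|]. unfold restr.
    destruct (_ && _)%bool; [lra|]. rewrite Rabs_R0. apply Rabs_pos.
Qed.

Lemma interval_norm_spread b p m K : strictly_increasing_below p m ->
  (forall j, (j < m)%nat -> (p j < K)%nat) -> interval_norm (spread b p m) K = interval_norm b m.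
Proof.
  intros Hp HK. apply Rle_antisym.
  - apply interval_norm_le; [apply interval_norm_nonneg|]. intros al be Hab.
    set (mk := fun j => andb (Nat.leb al (p j)) (Nat.leb (p j) be)).
    rewrite (coef_norm_ext _ (spread (fun j => if mk j then b j else 0) p m))
      by (intros; apply restr_spread).
    rewrite coef_norm_spread by auto.
    destruct (convex_mask_interval mk m) as [Hnone|[j1 [j2 [Hj Hint]]]].
    + intros i t j Hitj Hjm. unfold mk.
      assert (p i <= p t <= p j)%nat
        by (split; apply (strictly_increasing_below_le p m); auto; lia).
      case_nat_tests; simpl; intros; try discriminate; auto; lia.
    + rewrite coef_norm_eq0; [apply interval_norm_nonneg|]. intros i Hi. rewrite Hnone; auto.
    + rewrite (coef_norm_ext _ (restr b j1 j2)); [apply interval_norm_ge; auto|].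
      intros i Hi. unfold restr. rewrite <- Hint; auto.
  - apply interval_norm_le; [apply interval_norm_nonneg|]. intros j1 j2 Hj.
    assert (p j1 <= p j2 < K)%nat
      by (split; [apply (strictly_increasing_below_le p m)|apply HK]; auto; lia).
    rewrite <- coef_norm_spread with (p := p) (K := K) by auto.
    rewrite (coef_norm_ext _ (restr (spread b p m) (p j1) (p j2))); [apply interval_norm_ge; auto|].
    intros i _. rewrite restr_spread. apply spread_ext. intros j Hjm. unfold restr.
    pose proof (strictly_increasing_below_le p m j1 j Hp ltac:(lia) Hjm).
    pose proof (strictly_increasing_below_le p m j j2 Hp Hjm ltac:(lia)).
    case_nat_tests; simpl; auto; exfalso; tauto || lia.
Qed.

Lemma interval_norm_bimonotone a al be n : (al <= be < n)%nat ->
  interval_norm (restr a al be) n <= interval_norm a n.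
Proof.
  intros Hab. apply interval_norm_le; [apply interval_norm_nonneg|]. intros p q Hpq.
  destruct (Nat.le_gt_cases (max al p) (min be q)).
  - rewrite (coef_norm_ext _ (restr a (max al p) (min be q))); [apply interval_norm_ge; lia|].
    intros i _. unfold restr. case_nat_tests; simpl; auto; lia.
  - rewrite coef_norm_eq0; [apply interval_norm_nonneg|].
    intros i _. unfold restr. case_nat_tests; simpl; auto; lia.
Qed.

Definition interval_spreading_norm : BimonotoneSpreadingNorm :=
  {| nrm := interval_norm; unit_bound := snorm E (e 0%nat);
     unit_bound_nonneg := snorm_nonneg E (e 0%nat);
     nrm_ext := interval_norm_ext; nrm_trunc := interval_norm_trunc; nrm_add := interval_norm_add;
     nrm_scal := interval_norm_scal; nrm_le_l1 := interval_norm_le_l1;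
     nrm_spread := interval_norm_spread; nrm_bimonotone := interval_norm_bimonotone |}.

Lemma coef_norm_le_interval_norm a n : coef_norm a n <= interval_norm a n.
Proof.
  destruct n; [unfold coef_norm; simpl; rewrite snorm_vzero; apply interval_norm_nonneg|].
  rewrite (coef_norm_ext a (restr a 0 n))
    by (intros i Hi; unfold restr; case_nat_tests; simpl; auto; lia).
  apply interval_norm_ge; lia.
Qed.

(* An interval projection is the difference of two initial-segment projections. *)
Lemma interval_norm_le_schauder Ks :
  (forall a m n, (m <= n)%nat -> coef_norm a m <= Ks * coef_norm a n) ->
  forall a n, interval_norm a n <= (2 * Rabs Ks + 1) * coef_norm a n.
Proof.
  intros HKs a n. pose proof (Rabs_pos Ks). pose proof (snorm_nonneg E (lincomb E a e n)).
  fold (coef_norm a n) in *.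
  assert (Hproj : forall m, (m <= n)%nat -> coef_norm a m <= Rabs Ks * coef_norm a n)
    by (intros m Hm; pose proof (HKs a m n Hm); pose proof (Rle_abs Ks); nra).
  apply interval_norm_le; [nra|]. intros p q Hpq.
  rewrite (coef_norm_ext _ (fun i => (if Nat.ltb i (S q) then a i else 0)
                                     + -1 * (if Nat.ltb i p then a i else 0)))
    by (intros; unfold restr; case_nat_tests; simpl; try lia; ring).
  eapply Rle_trans; [apply coef_norm_add|]. rewrite coef_norm_scal, Rabs_m1, Rmult_1_l.
  rewrite (coef_norm_trunc _ (S q) n), (coef_norm_trunc _ p n)
    by (lia || (intros; case_nat_tests; auto; lia)).
  rewrite (coef_norm_ext _ a (S q)), (coef_norm_ext _ a p) by (intros; case_nat_tests; auto; lia).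
  pose proof (Hproj (S q) ltac:(lia)). pose proof (Hproj p ltac:(lia)). nra.
Qed.

End SpreadingSequence.

Theorem mainTheorem16 :
  forall (E : SNSpace) (e : nat -> E),
    schauder_basic E e -> spreading E e ->
    (exists (F : SNSpace) (f : nat -> F), in_SM2_c0 F f /\ equivalent E F e f) /\
    (bimonotone E e ->
       exists (F : SNSpace) (f : nat -> F), in_SM2_c0 F f /\ isometrically_equivalent E F e f).
Proof.
  intros E e [_ [Ks HKs]] Hs. split.
  - set (D := interval_spreading_norm E e Hs).
    exists (c00_space D), (unit_vec D). split; [apply unit_vec_in_SM2_c0|].
    exists 1, (2 * Rabs Ks + 1). split; [lra|]. split; [pose proof (Rabs_pos Ks); lra|].
    intros a n. rewrite snorm_lincomb_unit_vec, Rmult_1_l. split.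
    + apply coef_norm_le_interval_norm.
    + apply interval_norm_le_schauder, HKs.
  - intros Hb. set (D := coef_spreading_norm E e Hs Hb).
    exists (c00_space D), (unit_vec D). split; [apply unit_vec_in_SM2_c0|].
    intros a n. rewrite snorm_lincomb_unit_vec. reflexivity.
Qed.
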